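(* Let $\mathfrak L=\mathbb V\oplus\mathbb W$ be a color gLt-algebra admitting a quasi-multiplicative basis $\mathfrak B=\{e_i\}_{i\in I}$ of $\mathbb W\neq 0$, and let $\mu$ be the associated map defined in the context. Let $i,j\in I$ and $X\in\mathfrak I^{\,n-1}\,\dot\cup\,\overline{\mathfrak I}^{\,n-1}$. Then $i\in\mu(j,X)$ if and only if $j\in\mu(i,\overline X)$.
   Context: Let $\mathbb F$ be a field, $\mathbb G$ an abelian group, $n\ge 2$, and $\epsilon:\mathbb G\times\mathbb G\to\mathbb F\setminus\{0\}$ a bicharacter ($\epsilon(k,g+h)=\epsilon(k,g)\epsilon(k,h)$, $\epsilon(g+h,k)=\epsilon(g,k)\epsilon(h,k)$, $\epsilon(g,h)\epsilon(h,g)=1$). A graded $n$-ary algebra is a $\mathbb G$-graded vector space $\mathfrak L=\bigoplus_{g\in\mathbb G}\mathfrak L_g$ with an $n$-linear map $\langle\cdot,\dots,\cdot\rangle:\mathfrak L^n\to\mathfrak L$ such that $\langle\mathfrak L_{g_1},\dots,\mathfrak L_{g_n}\rangle\subset\mathfrak L_{g_1+\dots+g_n}$. For $\sigma\in\mathbb S_n$ write $\langle x_1,\dots,x_n\rangle_\sigma:=\langle x_{\sigma(1)},\dots,x_{\sigma(n)}\rangle$; for subsets $A_1,\dots,A_n$, $\langle A_1,\dots,A_n\rangle_\sigma$ denotes the linear span of all $\langle x_1,\dots,x_n\rangle_\sigma$ with $x_r\in A_r$. A color gLt-algebra is a graded $n$-ary algebra satisfying, for each $k=1,\dots,n$ and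 fixed scalars $\alpha^{\sigma_1,\sigma_2}_{i,j,k}\in\mathbb F$, the color version (each term on the right multiplied by the product of values of $\epsilon$ on the degrees of the homogeneous arguments transposed in passing from the left-hand order to the order of that term) of the identity $\langle y_1,\dots,y_{k-1},\langle x_1,\dots,x_n\rangle,y_k,\dots,y_{n-1}\rangle=\sum_{1\le i,j\le n,\,\sigma_1\in\mathbb S_n,\,\sigma_2\in\mathbb S_{n-1}}\alpha^{\sigma_1,\sigma_2}_{i,j,k}\langle x_{\sigma_1(1)},\dots,x_{\sigma_1(i-1)},\langle y_{\sigma_2(1)},\dots,y_{\sigma_2(j-1)},x_{\sigma_1(i)},y_{\sigma_2(j)},\dots,y_{\sigma_2(n-1)}\rangle,x_{\sigma_1(i+1)},\dots,x_{\sigma_1(n)}\rangle$. $\mathfrak L$ admits a quasi-multiplicative basis if $\mathfrak L=\mathbb V\oplus\mathbb W$ with $\mathbb V$, $\mathbb W\ne0$ graded subspaces and $\mathfrak B=\{e_i\}_{i\in I}$ a basis of homogeneous elements of $\mathbb W$ such that: (1) for $i_1,\dots,i_n\in I$, either $\langle e_{i_1},\dots,e_{i_n}\rangle\in\mathbb Fe_j$ for some $j\in I$ or $\langle e_{i_1},\dots,e_{i_n}\rangle\in\mathbb V$; (2) for $0<k<n$, $i_1,\dots,i_k\in I$ and $\sigma\in\mathbb S_n$, $\langle e_{i_1},\dots,e_{i_k},\mathbb V,\dots,\mathbb V\rangle_\sigma\subset\mathbb Fe_{j_\sigma}$ for some $j_\sigma\in I$; (3) either $\langle\mathbb V,\dots,\mathbb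 V\rangle\subset\mathbb Fe_j$ for some $j\in I$ or $\langle\mathbb V,\dots,\mathbb V\rangle\subset\mathbb V$. Index maps: let $v$ be a symbol not in $I$, $\mathfrak I:=I\,\dot\cup\,\{v\}$; for each $j\in\mathfrak I$ take a new symbol $\overline j$, $\overline I:=\{\overline i:i\in I\}$, $\overline{\mathfrak I}:=\overline I\,\dot\cup\,\{\overline v\}$; set $\overline{(\overline j)}:=j$, $\overline J:=\{\overline j:j\in J\}$ for a set $J$ of symbols, and $\overline X:=(\overline a_2,\dots,\overline a_n)$ for a tuple $X=(a_2,\dots,a_n)$. Put $u_j:=e_j$ for $j\in I$ and $u_v:=\mathbb V$. For $\sigma\in\mathbb S_n$ and $(j_1,\dots,j_n)\in\mathfrak I^n$ let $a_\sigma(j_1,\dots,j_n)=\{r\}$ if $r\in I$ and $0\ne\langle u_{j_1},\dots,u_{j_n}\rangle_\sigma\subset\mathbb Fe_r$, $=\{v\}$ if $0\ne\langle u_{j_1},\dots,u_{j_n}\rangle_\sigma\subset\mathbb V$, and $=\emptyset$ otherwise. For $j,j_2,\dots,j_n\in\mathfrak I$ let $b_\sigma(j,\overline j_2,\dots,\overline j_n):=\{x\in\mathfrak I: a_\sigma(x,j_2,\dots,j_n)=\{j\}\}$. Define $\mu$ on $(\mathfrak I\,\dot\cup\,\overline{\mathfrak I})\times(\mathfrak I^{n-1}\,\dot\cup\,\overline{\mathfrak I}^{n-1})$ with values subsets of $\mathfrak I$ by: $\mu(j,j_1,\dots,j_{n-1})=\bigcup_{\sigma\in\mathbb S_n}a_\sigma(j,j_1,\dots,j_{n-1})$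 for $j,j_1,\dots,j_{n-1}\in\mathfrak I$; $\mu(j,\overline j_1,\dots,\overline j_{n-1})=\bigcup_{\sigma\in\mathbb S_n}b_\sigma(j,\overline j_1,\dots,\overline j_{n-1})$ for $j,j_1,\dots,j_{n-1}\in\mathfrak I$; $\mu(\overline j,j_1,\dots,j_{n-1})=\bigcup_{1\le k\le n-1,\ \sigma\in\mathbb S_n}b_\sigma(j_k,\overline j,\overline j_1,\dots,\overline j_{k-1},\overline j_{k+1},\dots,\overline j_{n-1})$ for $j,j_1,\dots,j_{n-1}\in\mathfrak I$; and $\mu(\overline j,\overline j_1,\dots,\overline j_{n-1})=\emptyset$. *)

From HB Require Import structures.
From mathcomp Require Import all_boot all_order all_algebra all_fingroup.
Set Implicit Arguments. Unset Strict Implicit. Unset Printing Implicit Defensive.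
Import GRing.Theory.
Local Open Scope ring_scope.

Section LinAlg.
Variables (F : fieldType) (L : lmodType F).

Definition subspace (S : L -> Prop) :=
  S 0 /\ (forall (a : F) x y, S x -> S y -> S (a *: x + y)).

Definition span (S : L -> Prop) : L -> Prop :=
  fun y => exists m (c : 'I_m -> F) (s : 'I_m -> L),
    (forall k, S (s k)) /\ y = \sum_(k < m) c k *: s k.

Definition line (I : Type) (e : I -> L) (j : I) : L -> Prop :=
  fun y => exists c : F, y = c *: e j.

Definition is_basis_of (I : Type) (W : L -> Prop) (e : I -> L) :=
  (forall i, W (e i)) /\
  (forall m (f : 'I_m -> I) (c : 'I_m -> F), injective f ->
     \sum_(k < m) c k *: e (f k) = 0 -> forall k, c k = 0) /\
  (forall w, W w -> exists m (f : 'I_m -> I) (c : 'I_m -> F),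
     w = \sum_(k < m) c k *: e (f k)).
End LinAlg.

Section Graded.
Variables (F : fieldType) (G : zmodType) (L : lmodType F).

Definition graded_space (Lg : G -> L -> Prop) :=
  (forall g, subspace (Lg g)) /\
  (forall x : L, exists (s : seq G) (xs : G -> L),
      (forall g, Lg g (xs g)) /\ x = \sum_(g <- s) xs g) /\
  (forall (s : seq G) (xs : G -> L), uniq s -> (forall g, Lg g (xs g)) ->
      \sum_(g <- s) xs g = 0 -> forall g, g \in s -> xs g = 0).

Definition homog (Lg : G -> L -> Prop) (x : L) := exists g, Lg g x.

Definition graded_sub (Lg : G -> L -> Prop) (S : L -> Prop) :=
  subspace S /\
  (forall x, S x -> exists (s : seq G) (xs : G -> L),
      (forall g, Lg g (xs g) /\ S (xs g)) /\ x = \sum_(g <- s) xs g).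

Definition bicharacter (eps : G -> G -> F) :=
  (forall g h, eps g h != 0) /\
  (forall k g h, eps k (g + h) = eps k g * eps k h) /\
  (forall g h k, eps (g + h) k = eps g k * eps h k) /\
  (forall g h, eps g h * eps h g = 1).
End Graded.

Definition nthf (T : Type) (m : nat) (d : T) (f : 'I_m -> T) (p : nat) : T :=
  match (insub p : option 'I_m) with Some i => f i | None => d end.

Section Nary.
Variables (F : fieldType) (G : zmodType) (L : lmodType F) (n : nat).
Variable mult : {ffun 'I_n -> L} -> L.

Definition upd (x : {ffun 'I_n -> L}) (k : 'I_n) (a : L) : {ffun 'I_n -> L} :=
  [ffun p => if p == k then a else x p].

Definition multilinear :=
  forall x k (a : F) u v,
    mult (upd x k (a *: u + v)) = a *: mult (upd x k u) + mult (upd x k v).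

Definition graded_mult (Lg : G -> L -> Prop) :=
  forall (x : {ffun 'I_n -> L}) (d : 'I_n -> G),
    (forall r, Lg (d r) (x r)) -> Lg (\sum_(r < n) d r) (mult x).

(* the n-tuple (f_0,..,f_{k-1}, a, f_k, ..., f_{m-1}) (0-indexed) *)
Definition ins (m : nat) (k : 'I_n) (a : L) (f : 'I_m -> L) : {ffun 'I_n -> L} :=
  [ffun p : 'I_n => if (p < k)%N then nthf 0 f p
                    else if p == k then a else nthf 0 f p.-1].

(* Arguments of the identity: inl r = x_r, inr s = y_s.  Positions (0-indexed)
   in the left-hand side order and in the order of the term (i,j,s1,s2). *)
Definition posL (k : 'I_n) (a : ('I_n + 'I_(n-1))%type) : nat :=
  match a with
  | inl r => (k + r)%N
  | inr s => if (s < k)%N then nat_of_ord s else (s + n)%N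
  end.

Definition posR (i j : 'I_n) (s1 : 'S_n) (s2 : 'S_(n-1))
  (a : ('I_n + 'I_(n-1))%type) : nat :=
  match a with
  | inl r => let p := (s1^-1)%g r in
             if (p < i)%N then nat_of_ord p
             else if p == i then (i + j)%N else (p + n - 1)%N
  | inr s => let q := (s2^-1)%g s in
             if (q < j)%N then (i + q)%N else (i + q).+1
  end.

(* Koszul-type color factor: product of eps(deg a, deg b) over all pairs
   (a, b) with a before b in the left-hand order and b before a in the term *)
Definition color_sign (eps : G -> G -> F) (deg : ('I_n + 'I_(n-1))%type -> G)
  (k i j : 'I_n) (s1 : 'S_n) (s2 : 'S_(n-1)) : F :=
  \prod_(a : ('I_n + 'I_(n-1))%type)
    \prod_(b : ('I_n + 'I_(n-1))%type |
           (posL k a < posL k b)%N && (posR i j s1 s2 b < posR i j s1 s2 a)%N)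
      eps (deg a) (deg b).

Definition gLt_term (i j : 'I_n) (s1 : 'S_n) (s2 : 'S_(n-1))
  (x : {ffun 'I_n -> L}) (y : 'I_(n-1) -> L) : L :=
  mult [ffun p => if p == i then mult (ins j (x (s1 p)) (fun q => y (s2 q)))
                  else x (s1 p)].

Definition color_gLt_identity (eps : G -> G -> F) (Lg : G -> L -> Prop)
  (alpha : 'I_n -> 'I_n -> 'I_n -> 'S_n -> 'S_(n-1) -> F) :=
  forall (k : 'I_n) (x : {ffun 'I_n -> L}) (dx : 'I_n -> G)
         (y : 'I_(n-1) -> L) (dy : 'I_(n-1) -> G),
    (forall r, Lg (dx r) (x r)) -> (forall s, Lg (dy s) (y s)) ->
    let deg a := match a with inl r => dx r | inr s => dy s end in
    mult (ins k (mult x) y) =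
    \sum_(i < n) \sum_(j < n) \sum_(s1 : 'S_n) \sum_(s2 : 'S_(n-1))
       (alpha i j k s1 s2 * color_sign eps deg k i j s1 s2) *: gLt_term i j s1 s2 x y.

Definition color_gLt_algebra (eps : G -> G -> F) (Lg : G -> L -> Prop)
  (alpha : 'I_n -> 'I_n -> 'I_n -> 'S_n -> 'S_(n-1) -> F) :=
  (2 <= n)%N /\ bicharacter eps /\ graded_space Lg /\ multilinear /\
  graded_mult Lg /\ color_gLt_identity eps Lg alpha.

Definition brk (s : 'S_n) (A : 'I_n -> L -> Prop) : L -> Prop :=
  span (fun y => exists x : {ffun 'I_n -> L},
                   (forall r, A r (x r)) /\ y = mult [ffun p => x (s p)]).

Definition quasi_mult_basis (Lg : G -> L -> Prop) (V W : L -> Prop)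
  (I : Type) (e : I -> L) :=
  graded_sub Lg V /\ graded_sub Lg W /\
  (exists v, V v /\ v <> 0) /\ (exists w, W w /\ w <> 0) /\
  (forall x, exists v w, V v /\ W w /\ x = v + w) /\
  (forall x, V x -> W x -> x = 0) /\
  is_basis_of W e /\ (forall i, homog Lg (e i)) /\
  (forall f : 'I_n -> I,
     (exists j (c : F), mult [ffun r => e (f r)] = c *: e j) \/
     V (mult [ffun r => e (f r)])) /\
  (forall (k : nat) (f : 'I_n -> I) (s : 'S_n), (0 < k < n)%N ->
     exists j, forall y,
       brk s (fun r z => if (r < k)%N then z = e (f r) else V z) y -> line e j y) /\
  ((exists j, forall y, brk 1%g (fun _ => V) y -> line e j y) \/
   (forall y, brk 1%g (fun _ => V) y -> V y)).

Variables (V : L -> Prop) (I : Type) (e : I -> L).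

(* option I = \mathfrak I, with None = v *)
Definition u (j : option I) : L -> Prop :=
  match j with Some i => fun y => y = e i | None => V end.

Definition a_map (s : 'S_n) (J : 'I_n -> option I) : option I -> Prop :=
  fun t =>
    (exists y, brk s (fun r => u (J r)) y /\ y <> 0) /\
    (forall y, brk s (fun r => u (J r)) y ->
       match t with Some r => line e r y | None => V y end).

Definition tcons (t : option I) (Y : nat -> option I) : 'I_n -> option I :=
  fun p => match nat_of_ord p with 0 => t | q.+1 => Y q end.

Definition b_map (s : 'S_n) (j : option I) (Y : nat -> option I) : option I -> Prop :=
  fun x => forall w, a_map s (tcons x Y) w <-> w = j.

End Nary.

(* \mathfrak I \dot\cup \bar{\mathfrak I} and
   \mathfrak I^{n-1} \dot\cup \bar{\mathfrak I}^{n-1} *)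
Inductive barred (T : Type) := Plain of T | Bar of T.
Arguments Plain {T}. Arguments Bar {T}.

Definition barX (T : Type) (X : barred T) : barred T :=
  match X with Plain J => Bar J | Bar J => Plain J end.

Section Mu.
Variables (F : fieldType) (L : lmodType F) (n : nat).
Variables (mult : {ffun 'I_n -> L} -> L) (V : L -> Prop) (I : Type) (e : I -> L).

Definition mu (A : barred (option I)) (X : barred ('I_(n-1) -> option I))
  : option I -> Prop :=
  match A, X with
  | Plain j, Plain J => fun t => exists s : 'S_n, a_map mult V e s (tcons j (nthf None J)) t
  | Plain j, Bar J => fun t => exists s : 'S_n, b_map mult V e s j (nthf None J) t
  | Bar j, Plain J => fun t => exists (k : 'I_(n-1)) (s : 'S_n),
      b_map mult V e s (J k)
        (fun q => match q with
                  | 0 => j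
                  | q'.+1 => nthf None J (if (q' < k)%N then q' else q'.+1)
                  end) t
  | Bar _, Bar _ => fun _ => False
  end.
End Mu.

(* Once a product of index vectors is known to be a nonzero multiple of a basis
   vector [e_r], it lies on no other line [F e_r'] (the [e_i] are independent)
   and not in [V] (since [V \cap W = 0]).  Hence [a_sigma] is a singleton as soon
   as it contains some [r \in I], which is exactly the content of [b_sigma].
   Neither the gLt identity nor the grading plays any role. *)
From HB Require Import structures.
From mathcomp Require Import all_boot all_order all_algebra all_fingroup.
From Stdlib Require Import Classical.
Set Implicit Arguments.
Unset Strict Implicit.
Unset Printing Implicit Defensive.
Import GRing.Theory.
Local Open Scope ring_scope.

Section BasisLines.
Variables (F : fieldType) (L : lmodType F) (I : Type).
Variables (W : L -> Prop) (e : I -> L).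
Hypothesis e_basis : is_basis_of W e.

Lemma basis_scale_eq0 (r r' : I) (c c' : F) :
  r <> r' -> c *: e r = c' *: e r' -> c = 0.
Proof.
move=> neq_rr' eq_cc'.
have [_ [e_free _]] := e_basis.
pose f (k : 'I_2) := if val k == 0%N then r else r'.
pose d (k : 'I_2) := if val k == 0%N then c else - c'.
have f_inj : injective f.
  by move=> [[|[|k1]] ?] [[|[|k2]] ?] //= eq_f; apply/val_inj => //=;
    exfalso; apply: neq_rr'.
have sum0 : \sum_(k < 2) d k *: e (f k) = 0.
  by rewrite !big_ord_recr big_ord0 /= /d /f /= add0r eq_cc' scaleNr subrr.
exact: (e_free 2 f d f_inj sum0 ord0).
Qed.

Lemma line_basis_inj (r r' : I) (y : L) :
  y <> 0 -> line e r y -> line e r' y -> r = r'.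
Proof.
move=> y_neq0 [c y_def] [c' y_def']; apply: NNPP => neq_rr'; apply: y_neq0.
by rewrite y_def (basis_scale_eq0 neq_rr' (etrans (esym y_def) y_def')) scale0r.
Qed.

Hypothesis W_subspace : subspace W.
Variable V : L -> Prop.
Hypothesis VW_trivial : forall x, V x -> W x -> x = 0.

Lemma line_in_V_eq0 (r : I) (y : L) : line e r y -> V y -> y = 0.
Proof.
move=> [c ->] Vy; apply: VW_trivial => //.
have [_ W_comb] := W_subspace.
by rewrite -[c *: e r]addr0; apply: W_comb; [case: e_basis | case: W_subspace].
Qed.

Variables (n : nat) (mult : {ffun 'I_n -> L} -> L).

Lemma a_map_basis_uniq (s : 'S_n) (J : 'I_n -> option I) (r : I) (t : option I) :
  a_map mult V e s J (Some r) -> a_map mult V e s J t -> t = Some r.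
Proof.
move=> [[y [y_brk y_neq0]] y_line_r] [_ y_in_t].
case: t y_in_t => [r'|] y_in_t.
- by rewrite (line_basis_inj y_neq0 (y_in_t y y_brk) (y_line_r y y_brk)).
- exfalso; apply: y_neq0.
  exact: line_in_V_eq0 (y_line_r y y_brk) (y_in_t y y_brk).
Qed.

Lemma b_mapE (s : 'S_n) (r : I) (Y : nat -> option I) (x : option I) :
  b_map mult V e s (Some r) Y x <-> a_map mult V e s (tcons x Y) (Some r).
Proof.
split=> [b_x | a_r]; first exact/b_x.
by move=> t; split=> [|->] //; apply: a_map_basis_uniq.
Qed.

End BasisLines.

Theorem lemma3p1 (F : fieldType) (G : zmodType) (n : nat)
  (eps : G -> G -> F) (L : lmodType F) (Lg : G -> L -> Prop)
  (mult : {ffun 'I_n -> L} -> L)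
  (alpha : 'I_n -> 'I_n -> 'I_n -> 'S_n -> 'S_(n-1) -> F)
  (hL : color_gLt_algebra mult eps Lg alpha)
  (V W : L -> Prop) (I : Type) (e : I -> L)
  (hB : quasi_mult_basis mult Lg V W e)
  (i j : I) (X : barred ('I_(n-1) -> option I)) :
  mu mult V e (Plain (Some j)) X (Some i) <->
  mu mult V e (Plain (Some i)) (barX X) (Some j).
Proof.
have [_ [[W_subspace _] [_ [_ [_ [VW_trivial [e_basis _]]]]]]] := hB.
have b_mapE' := b_mapE e_basis W_subspace VW_trivial mult.
by case: X => J /=; split=> -[s h]; exists s; apply/b_mapE'.
Qed.
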